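(* Let $d>k\geq1$, $\varepsilon\in(0,1)$, $A\succeq0$ symmetric with $\lambda_k>\lambda_{k+1}$, $\beta>0$ with $\lambda_k>2\sqrt\beta\geq\lambda_{k+1}$, $X_0\in\mathrm{St}(d,k)$ with $\cos\theta_k(U_k,X_0)>0$, and ANPM perturbations satisfying for all $t\geq0$: $\|U_{-k}^\top\Xi_t\|_2\leq c(\lambda_k-2\sqrt\beta)\varepsilon$ and $\|U_k^\top\Xi_t\|_2\leq c(\lambda_k-2\sqrt\beta)\cos\theta_k(U_k,X_t)$, $c=1/32$. Then for all $t\geq0$, $$\|G_t\|_2\leq\frac{r_+^t+\kappa r_-^t}{r_+^{t+1}+\kappa r_-^{t+1}},$$ where $r_\pm:=\frac{(1-c\Delta)\pm\sqrt{(1-c\Delta)^2-4\beta/\lambda_k^2}}{2}$ and $\kappa:=1+\frac{2c\Delta}{\sqrt{(1-c\Delta)^2-4\beta/\lambda_k^2}-c\Delta}$. Furthermore $\kappa\leq16/15$.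
   Context: $A$ has eigenvalues $\lambda_1\geq\dots\geq\lambda_d\geq0$, orthonormal eigenvectors $u_i$; $U_k:=[u_1..u_k]$, $U_{-k}:=[u_{k+1}..u_d]$, $\Lambda_k:=\mathrm{diag}(\lambda_1..\lambda_k)$. $\Delta:=(\lambda_k-2\sqrt\beta)/\lambda_k$. QR: $Y=XR$, $X^\top X=I_k$, $R$ upper triangular, nonnegative diagonal; $\theta_k(U,X):=\arccos\sigma_{\min}(U^\top X)$. ANPM: $(X_1,R_1)=\mathrm{QR}(\tfrac12AX_0+\Xi_0)$; for $t\geq1$, $Y_{t+1}=AX_t-\beta X_{t-1}R_t^{-1}+\Xi_t$, $(X_{t+1},R_{t+1})=\mathrm{QR}(Y_{t+1})$. $E_t:=\Lambda_k^{-1}(U_k^\top\Xi_t)(U_k^\top X_t)^{-1}$; $G_0:=(I_k/2+E_0)^{-1}$, $G_{t+1}:=(I_k-\beta\Lambda_k^{-1}G_t\Lambda_k^{-1}+E_{t+1})^{-1}$. *)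

From HB Require Import structures.
From mathcomp Require Import all_boot all_order all_algebra.
From mathcomp Require Import classical_sets reals trigo.
Set Implicit Arguments. Unset Strict Implicit. Unset Printing Implicit Defensive.
Import Order.TTheory GRing.Theory Num.Theory.
Local Open Scope ring_scope.
Local Open Scope classical_set_scope.

Definition vnorm {R : realType} {q : nat} (v : 'cV[R]_q) : R :=
  Num.sqrt (\sum_(i < q) (v i 0) ^+ 2).

Definition opnorm {R : realType} {p q : nat} (M : 'M[R]_(p, q)) : R :=
  sup [set vnorm (M *m v) | v in [set v : 'cV[R]_q | vnorm v <= 1]].

Definition smin {R : realType} {p q : nat} (M : 'M[R]_(p, q)) : R :=
  inf [set vnorm (M *m v) | v in [set v : 'cV[R]_q | vnorm v = 1]].

Definition theta_k {R : realType} {d k : nat} (U X : 'M[R]_(d, k)) : R :=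
  acos (smin (U^T *m X)).

Definition isQR {R : realType} {d k : nat} (Y X : 'M[R]_(d, k)) (Rm : 'M[R]_k) : Prop :=
  [/\ Y = X *m Rm, X^T *m X = 1%:M,
      (forall i j : 'I_k, (j < i)%N -> Rm i j = 0) &
      (forall i : 'I_k, 0 <= Rm i i)].

Definition Emat {R : realType} {d k : nat} (Lam : 'M[R]_k) (Uk Xi X : 'M[R]_(d, k))
  : 'M[R]_k := invmx Lam *m (Uk^T *m Xi) *m invmx (Uk^T *m X).

Fixpoint Gmat {R : realType} {d k : nat} (beta : R) (Lam : 'M[R]_k) (Uk : 'M[R]_(d, k))
  (Xi X : nat -> 'M[R]_(d, k)) (t : nat) : 'M[R]_k :=
  match t with
  | 0 => invmx (2^-1 *: 1%:M + Emat Lam Uk (Xi 0) (X 0))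
  | t'.+1 => invmx (1%:M - beta *: (invmx Lam *m Gmat beta Lam Uk Xi X t' *m invmx Lam)
                    + Emat Lam Uk (Xi t) (X t))
  end.

From HB Require Import structures.
From mathcomp Require Import all_boot all_order all_algebra.
From mathcomp Require Import classical_sets reals trigo.
From mathcomp Require Import ring lra.
Set Implicit Arguments. Unset Strict Implicit. Unset Printing Implicit Defensive.
Import Order.TTheory GRing.Theory Num.Theory.
Local Open Scope ring_scope.

(* Put u := c Delta.  Since cos theta_k(U_k, X_t) = sigma_min(U_k^T X_t), the
   perturbation bound gives ||E_t|| <= u.  Each G_t is the inverse of a
   perturbed scalar matrix, and ||(a I + N)^-1|| <= 1 / (a - ||N||); hence
   ||G_t|| <= h_t where h_0 = 1 / (1/2 - u) and
   h_(t+1) = 1 / (1 - u - (beta / lambda_k^2) h_t).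
   This Riccati recursion is linearised by h_t = s_t / s_(t+1) with
   s_(t+2) = (1 - u) s_(t+1) - (beta / lambda_k^2) s_t, whose solutions are
   combinations of r_+^t and r_-^t; kappa is fixed by the initial value h_0.
   The choice c = 1/32 makes the discriminant at least 31 u, which gives
   kappa <= 16/15. *)

Section EuclideanNorm.
Variable R : realType.
Implicit Types (p q : nat) (a : R).

Lemma vnorm_ge0 q (v : 'cV[R]_q) : 0 <= vnorm v.
Proof. exact: sqrtr_ge0. Qed.

Lemma vnorm_sq q (v : 'cV[R]_q) : vnorm v ^+ 2 = \sum_(i < q) v i 0 ^+ 2.
Proof. by rewrite sqr_sqrtr // sumr_ge0 // => i _; rewrite sqr_ge0. Qed.

Lemma vnormZ q a (v : 'cV[R]_q) : vnorm (a *: v) = `|a| * vnorm v.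
Proof.
apply/eqP; rewrite -(eqrXn2 (isT : (0 < 2)%N)) ?mulr_ge0 ?vnorm_ge0 //.
rewrite exprMn !vnorm_sq mulr_sumr; apply/eqP/eq_bigr => i _.
by rewrite mxE exprMn real_normK ?num_real.
Qed.

Lemma vnorm0 q : vnorm (0 : 'cV[R]_q) = 0.
Proof. by rewrite -(scale0r (0 : 'cV[R]_q)) vnormZ normr0 mul0r. Qed.

Lemma vnormN q (v : 'cV[R]_q) : vnorm (- v) = vnorm v.
Proof. by rewrite -scaleN1r vnormZ normrN normr1 mul1r. Qed.

Lemma vnorm_eq0 q (v : 'cV[R]_q) : (vnorm v == 0) = (v == 0).
Proof.
apply/idP/eqP => [v0|->]; last by rewrite vnorm0.
have : vnorm v ^+ 2 == 0 by rewrite (eqP v0) expr0n.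
rewrite vnorm_sq psumr_eq0 => [/allP sq0|i _]; last exact: sqr_ge0.
apply/matrixP => i j; rewrite (ord1 j) mxE; apply/eqP.
by rewrite -sqrf_eq0; exact: implyP (sq0 i (mem_index_enum _)) isT.
Qed.

Lemma vnorm_gt0 q (v : 'cV[R]_q) : (0 < vnorm v) = (v != 0).
Proof. by rewrite lt0r vnorm_ge0 vnorm_eq0 andbT. Qed.

Lemma vnorm_normalize q (v : 'cV[R]_q) : v != 0 -> vnorm ((vnorm v)^-1 *: v) = 1.
Proof.
rewrite -vnorm_gt0 => v0.
by rewrite vnormZ ger0_norm ?invr_ge0 ?vnorm_ge0 // mulVf ?gt_eqF.
Qed.

Lemma dot_le_vnorm q (u v : 'cV[R]_q) :
  \sum_(i < q) u i 0 * v i 0 <= vnorm u * vnorm v.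
Proof.
have [->|u0] := eqVneq u 0.
  by rewrite vnorm0 mul0r big1 // => i _; rewrite mxE mul0r.
have [->|v0] := eqVneq v 0.
  by rewrite vnorm0 mulr0 big1 // => i _; rewrite mxE mulr0.
rewrite -vnorm_gt0 in u0; rewrite -vnorm_gt0 in v0.
set a := vnorm u in u0 *; set b := vnorm v in v0 *.
have : 2 * a * b * (\sum_(i < q) u i 0 * v i 0) <=
       b ^+ 2 * (\sum_(i < q) u i 0 ^+ 2) + a ^+ 2 * (\sum_(i < q) v i 0 ^+ 2).
  rewrite !mulr_sumr -big_split /=; apply: ler_sum => i _.
  have := sqr_ge0 (b * u i 0 - a * v i 0); nra.
rewrite -!vnorm_sq -/a -/b => h.
have ab0 : 0 < a * b by rewrite mulr_gt0.
nra.
Qed.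

Lemma vnormD q (u v : 'cV[R]_q) : vnorm (u + v) <= vnorm u + vnorm v.
Proof.
rewrite -(ler_pXn2r (isT : (0 < 2)%N)) ?nnegrE ?vnorm_ge0 ?addr_ge0 ?vnorm_ge0 //.
have -> : vnorm (u + v) ^+ 2 =
    vnorm u ^+ 2 + 2 * (\sum_(i < q) u i 0 * v i 0) + vnorm v ^+ 2.
  rewrite !vnorm_sq mulr_sumr -!big_split /=.
  by apply: eq_bigr => i _; rewrite mxE; ring.
have := dot_le_vnorm u v; nra.
Qed.

Lemma vnorm_coord q (v : 'cV[R]_q) i : `|v i 0| <= vnorm v.
Proof.
rewrite -(ler_pXn2r (isT : (0 < 2)%N)) ?nnegrE ?vnorm_ge0 //.
rewrite real_normK ?num_real // vnorm_sq (bigD1 i) //= lerDl.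
by apply: sumr_ge0 => j _; rewrite sqr_ge0.
Qed.

Lemma vnorm_le_l1 q (v : 'cV[R]_q) : vnorm v <= \sum_(i < q) `|v i 0|.
Proof.
rewrite -(ler_pXn2r (isT : (0 < 2)%N)) ?nnegrE ?vnorm_ge0 ?sumr_ge0 //.
rewrite vnorm_sq expr2 mulr_sumr; apply: ler_sum => i _.
rewrite -real_normK ?num_real // expr2 ler_wpM2r //.
by rewrite (bigD1 i) //= lerDl sumr_ge0.
Qed.

Lemma vnorm_dot q (v : 'cV[R]_q) : vnorm v ^+ 2 = (v^T *m v) 0 0.
Proof. by rewrite vnorm_sq mxE; apply: eq_bigr => i _; rewrite mxE expr2. Qed.

Lemma vnorm_isometry p q (X : 'M[R]_(p, q)) v :
  X^T *m X = 1%:M -> vnorm (X *m v) = vnorm v.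
Proof.
move=> hX; apply/eqP; rewrite -(eqrXn2 (isT : (0 < 2)%N)) ?vnorm_ge0 //.
by rewrite !vnorm_dot trmx_mul mulmxA -(mulmxA _ X^T) hX mulmx1.
Qed.

Lemma vnorm_usubmx p q (v : 'cV[R]_(p + q)) : vnorm (usubmx v) <= vnorm v.
Proof.
rewrite -(ler_pXn2r (isT : (0 < 2)%N)) ?nnegrE ?vnorm_ge0 //.
rewrite !vnorm_sq big_split_ord /=.
under eq_bigr do rewrite mxE.
by rewrite lerDl sumr_ge0 // => i _; rewrite sqr_ge0.
Qed.

Lemma vnorm_lsubmx_orthogonal p q (U : 'M[R]_(p + q)) (w : 'cV[R]_(p + q)) :
  U^T *m U = 1%:M -> vnorm ((lsubmx U)^T *m w) <= vnorm w.
Proof.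
move=> hU; rewrite trmx_lsub mul_usub_mx; apply: le_trans (vnorm_usubmx _) _.
by rewrite vnorm_isometry // trmxK; exact: mulmx1C.
Qed.

Lemma vnorm_mulmx_le_sum p q (M : 'M[R]_(p, q)) (v : 'cV[R]_q) : vnorm v <= 1 ->
  vnorm (M *m v) <= \sum_(i < p) \sum_(j < q) `|M i j|.
Proof.
move=> v1; apply: le_trans (vnorm_le_l1 _) _; apply: ler_sum => i _.
rewrite mxE; apply: le_trans (ler_norm_sum _ _ _) _; apply: ler_sum => j _.
by rewrite normrM ler_piMr // (le_trans (vnorm_coord _ _)).
Qed.

Lemma opnorm_ub p q (M : 'M[R]_(p, q)) (v : 'cV[R]_q) : vnorm v <= 1 ->
  vnorm (M *m v) <= opnorm M.
Proof.
move=> v1; apply: sup_upper_bound; last by exists v.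
split; first by exists (vnorm (M *m v)), v.
by exists (\sum_(i < p) \sum_(j < q) `|M i j|) => _ [w w1 <-]; exact: vnorm_mulmx_le_sum.
Qed.

Lemma opnorm_le p q (M : 'M[R]_(p, q)) C :
  (forall v : 'cV[R]_q, vnorm v <= 1 -> vnorm (M *m v) <= C) -> opnorm M <= C.
Proof.
move=> MC; apply: ge_sup; first by exists (vnorm (M *m 0)), 0 => //=; rewrite vnorm0.
by move=> _ [w w1 <-]; exact: MC.
Qed.

Lemma opnorm_ge0 p q (M : 'M[R]_(p, q)) : 0 <= opnorm M.
Proof. by have := @opnorm_ub p q M 0; rewrite mulmx0 !vnorm0; apply. Qed.

Lemma vnorm_mulmx_le p q (M : 'M[R]_(p, q)) (v : 'cV[R]_q) :
  vnorm (M *m v) <= opnorm M * vnorm v.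
Proof.
have [->|v0] := eqVneq v 0; first by rewrite mulmx0 !vnorm0 mulr0.
have v1 : vnorm ((vnorm v)^-1 *: v) <= 1 by rewrite vnorm_normalize.
have := opnorm_ub M v1.
have vpos : 0 < vnorm v by rewrite vnorm_gt0.
by rewrite -scalemxAr vnormZ ger0_norm ?invr_ge0 ?(ltW vpos) // ler_pdivrMl // mulrC.
Qed.

Lemma opnormD p q (M N : 'M[R]_(p, q)) : opnorm (M + N) <= opnorm M + opnorm N.
Proof.
apply: opnorm_le => v v1; rewrite mulmxDl; apply: le_trans (vnormD _ _) _.
by apply: lerD; exact: opnorm_ub.
Qed.

Lemma opnormZ p q a (M : 'M[R]_(p, q)) : opnorm (a *: M) <= `|a| * opnorm M.
Proof.
apply: opnorm_le => v v1; rewrite -scalemxAl vnormZ ler_wpM2l //.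
exact: opnorm_ub.
Qed.

Lemma opnormM p q r (M : 'M[R]_(p, q)) (N : 'M[R]_(q, r)) :
  opnorm (M *m N) <= opnorm M * opnorm N.
Proof.
apply: opnorm_le => v v1; rewrite -mulmxA; apply: le_trans (vnorm_mulmx_le _ _) _.
by rewrite ler_wpM2l ?opnorm_ge0 ?opnorm_ub.
Qed.

Lemma unitmx_lbound n (M : 'M[R]_n) b : 0 < b ->
  (forall z, b * vnorm z <= vnorm (M *m z)) -> M \in unitmx.
Proof.
move=> b0 Mb; rewrite unitmxE unitfE; apply/eqP => detM0.
have /det0P [w w0 wM] : \det M^T == 0 by rewrite det_tr detM0.
have := Mb w^T; rewrite -(trmxK M) -trmx_mul wM trmx0 vnorm0.
have : 0 < vnorm w^T by rewrite vnorm_gt0 -trmx0 (inj_eq trmx_inj).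
by move=> wpos; rewrite pmulr_rle0 // leNgt wpos.
Qed.

Lemma opnorm_invmx_lbound n (M : 'M[R]_n) b : 0 < b ->
  (forall z, b * vnorm z <= vnorm (M *m z)) -> opnorm (invmx M) <= b^-1.
Proof.
move=> b0 Mb; have Mu := unitmx_lbound b0 Mb.
apply: opnorm_le => v v1; rewrite -(ler_pM2l b0) mulfV ?gt_eqF //.
by apply: le_trans (Mb _) _; rewrite mulmxA mulmxV // mul1mx.
Qed.

Lemma opnorm_invmx_scalar_addr n (N : 'M[R]_n) (al a : R) :
  opnorm N <= a -> a < al -> opnorm (invmx (al%:M + N)) <= (al - a)^-1.
Proof.
move=> Na aal; have al0 : 0 <= al by have := opnorm_ge0 N; lra.
apply: opnorm_invmx_lbound; first by rewrite subr_gt0.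
move=> z; have alz : al *: z = (al%:M + N) *m z - N *m z.
  by rewrite mulmxDl mul_scalar_mx addrK.
have := vnormD ((al%:M + N) *m z) (- (N *m z)).
rewrite -alz vnormN vnormZ ger0_norm //.
have := le_trans (vnorm_mulmx_le N z) (ler_wpM2r (vnorm_ge0 z) Na); lra.
Qed.

Lemma opnorm_invmx_diag n (d : 'rV[R]_n) (L : R) : 0 < L -> (forall i, L <= d 0 i) ->
  opnorm (invmx (diag_mx d)) <= L^-1.
Proof.
move=> L0 Ld; apply: opnorm_invmx_lbound => // z.
rewrite -(ler_pXn2r (isT : (0 < 2)%N)) ?nnegrE ?mulr_ge0 ?vnorm_ge0 ?(ltW L0) //.
rewrite exprMn !vnorm_sq mulr_sumr; apply: ler_sum => i _.
rewrite mul_diag_mx mxE exprMn ler_wpM2r ?sqr_ge0 //.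
have := Ld i; nra.
Qed.

Lemma vnorm_delta_mx q (i : 'I_q) : vnorm (delta_mx i 0 : 'cV[R]_q) = 1.
Proof.
apply/eqP; rewrite -(eqrXn2 (isT : (0 < 2)%N)) ?vnorm_ge0 ?ler01 // expr1n.
rewrite vnorm_sq (bigD1 i) //= big1 ?addr0 => [|j ji]; first by rewrite mxE !eqxx expr1n.
by rewrite mxE (negbTE ji) expr0n.
Qed.

Lemma smin_lb p q (M : 'M[R]_(p, q)) (v : 'cV[R]_q) : vnorm v = 1 ->
  smin M <= vnorm (M *m v).
Proof.
move=> v1; apply: ge_inf; last by exists v.
by exists 0 => _ [w _ <-]; exact: vnorm_ge0.
Qed.

Lemma smin_ge0 p q (M : 'M[R]_(p, q)) : (0 < q)%N -> 0 <= smin M.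
Proof.
move=> q0; apply: lb_le_inf; first by exists (vnorm (M *m delta_mx (Ordinal q0) 0)),
  (delta_mx (Ordinal q0) 0); rewrite //= vnorm_delta_mx.
by move=> _ [w _ <-]; exact: vnorm_ge0.
Qed.

Lemma smin_mulmx_le p q (M : 'M[R]_(p, q)) (z : 'cV[R]_q) :
  smin M * vnorm z <= vnorm (M *m z).
Proof.
have [->|z0] := eqVneq z 0; first by rewrite mulmx0 !vnorm0 mulr0.
have := smin_lb M (vnorm_normalize z0).
have zpos : 0 < vnorm z by rewrite vnorm_gt0.
by rewrite -scalemxAr vnormZ ger0_norm ?invr_ge0 ?(ltW zpos) // ler_pdivlMl // mulrC.
Qed.

(* No invertibility is needed: if [M] is singular, then [smin M <= 0]. *)
Lemma smin_invmx_le n (M : 'M[R]_n) (v : 'cV[R]_n) :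
  smin M * vnorm (invmx M *m v) <= vnorm v.
Proof.
have [Mu|Mnu] := boolP (M \in unitmx).
  by have := smin_mulmx_le M (invmx M *m v); rewrite mulmxA mulmxV // mul1mx.
have : smin M <= 0.
  apply: contraNT Mnu; rewrite -ltNge => s0.
  by apply: (unitmx_lbound s0) => z; exact: smin_mulmx_le.
by move=> s0; apply: le_trans (vnorm_ge0 v); rewrite mulr_le0_ge0 ?vnorm_ge0.
Qed.

Lemma opnorm_mulmx_invmx p n (P : 'M[R]_(p, n)) (M : 'M[R]_n) C : 0 <= C ->
  opnorm P <= C * smin M -> opnorm (P *m invmx M) <= C.
Proof.
move=> C0 PM; apply: opnorm_le => v v1; rewrite -mulmxA.
apply: le_trans (vnorm_mulmx_le _ _) _; apply: le_trans (ler_wpM2r (vnorm_ge0 _) PM) _.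
by rewrite -mulrA ler_piMr // (le_trans (smin_invmx_le _ _)).
Qed.

Lemma smin_lsubmx_le1 k m (U : 'M[R]_(k + m)) (X : 'M[R]_(k + m, k)) : (0 < k)%N ->
  U^T *m U = 1%:M -> X^T *m X = 1%:M -> smin ((lsubmx U)^T *m X) <= 1.
Proof.
move=> k0 hU hX; apply: le_trans (smin_lb _ (vnorm_delta_mx (Ordinal k0))) _.
rewrite -mulmxA; apply: le_trans (vnorm_lsubmx_orthogonal _ hU) _.
by rewrite vnorm_isometry // vnorm_delta_mx.
Qed.

Lemma cos_theta_k k m (U : 'M[R]_(k + m)) (X : 'M[R]_(k + m, k)) : (0 < k)%N ->
  U^T *m U = 1%:M -> X^T *m X = 1%:M ->
  cos (theta_k (lsubmx U) X) = smin ((lsubmx U)^T *m X).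
Proof.
move=> k0 hU hX; rewrite /theta_k acosK // in_itv /= smin_lsubmx_le1 // andbT.
by apply: le_trans (smin_ge0 _ k0); rewrite lerN10.
Qed.

Lemma opnorm_Emat k m (U : 'M[R]_(k + m)) (X Xi : 'M[R]_(k + m, k)) (d : 'rV[R]_k) L C :
  (0 < k)%N -> 0 < L -> (forall i, L <= d 0 i) -> 0 <= C ->
  U^T *m U = 1%:M -> X^T *m X = 1%:M ->
  opnorm ((lsubmx U)^T *m Xi) <= C * cos (theta_k (lsubmx U) X) ->
  opnorm (Emat (diag_mx d) (lsubmx U) Xi X) <= C / L.
Proof.
move=> k0 L0 Ld C0 hU hX; rewrite cos_theta_k // => hXi.
rewrite /Emat -mulmxA mulrC; apply: le_trans (opnormM _ _) _.
apply: le_trans (ler_wpM2r (opnorm_ge0 _) (opnorm_invmx_diag L0 Ld)) _.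
by rewrite ler_wpM2l ?invr_ge0 ?(ltW L0) ?opnorm_mulmx_invmx.
Qed.

Lemma opnorm_Gmat_step n (d : 'rV[R]_n) (L beta h u : R) (G E : 'M[R]_n) :
  0 < L -> (forall i, L <= d 0 i) -> 0 <= beta -> opnorm G <= h -> opnorm E <= u ->
  0 < 1 - u - beta / L ^+ 2 * h ->
  opnorm (invmx (1%:M - beta *: (invmx (diag_mx d) *m G *m invmx (diag_mx d)) + E))
    <= (1 - u - beta / L ^+ 2 * h)^-1.
Proof.
move=> L0 Ld beta0 Gh Eu; rewrite -[1 - u - _]addrA -opprD -addrA subr_gt0 => lt1.
apply: opnorm_invmx_scalar_addr lt1; rewrite addrC -scaleNr.
apply: le_trans (opnormD _ _) _; apply: lerD => //.
apply: le_trans (opnormZ _ _) _; rewrite normrN ger0_norm //.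
have -> : beta / L ^+ 2 * h = beta * (L^-1 * h * L^-1) by field; rewrite gt_eqF.
have Li := opnorm_invmx_diag L0 Ld.
apply/ler_wpM2l/(le_trans (opnormM _ _) (ler_pM _ _ _ Li)); rewrite ?opnorm_ge0 //.
by apply: le_trans (opnormM _ _) (ler_pM _ _ _ Gh); rewrite ?opnorm_ge0.
Qed.

End EuclideanNorm.

Section TwoTermRecurrence.
Variable R : realFieldType.

Lemma char_root_exprS (a b r : R) : r ^+ 2 = a * r - b ->
  forall t, r ^+ t.+2 = a * r ^+ t.+1 - b * r ^+ t.
Proof. by move=> r2 t; rewrite !exprS mulrA -expr2 r2; ring. Qed.

Lemma recurrence_ratio (a b : R) (s : nat -> R) :
  (forall t, 0 < s t) -> (forall t, s t.+2 = a * s t.+1 - b * s t) ->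
  forall t, 0 < a - b * (s t / s t.+1) /\ (a - b * (s t / s t.+1))^-1 = s t.+1 / s t.+2.
Proof.
move=> s0 srec t; have -> : a - b * (s t / s t.+1) = s t.+2 / s t.+1.
  by rewrite srec; field; rewrite gt_eqF.
by rewrite divr_gt0 // invf_div.
Qed.

End TwoTermRecurrence.

Section CharacteristicRoots.
Variables (R : rcfType) (u e : R).
Hypotheses (u_gt0 : 0 < u) (e_gt0 : 0 < e) (disc_ge : (31 * u) ^+ 2 <= (1 - u) ^+ 2 - e).

Local Notation D := (Num.sqrt ((1 - u) ^+ 2 - e)).
Local Notation rp := (((1 - u) + D) / 2).
Local Notation rm := (((1 - u) - D) / 2).
Local Notation kappa := (1 + 2 * u / (D - u)).
Local Notation s t := (rp ^+ t + kappa * rm ^+ t).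

Let u_lt1 : u < 1.
Proof. have := disc_ge; have := e_gt0; have := u_gt0; nra. Qed.

Let D_sq : D ^+ 2 = (1 - u) ^+ 2 - e.
Proof. by rewrite sqr_sqrtr // (le_trans _ disc_ge) ?sqr_ge0. Qed.

Let D_ge : 31 * u <= D.
Proof.
rewrite -(ler_pXn2r (isT : (0 < 2)%N)) ?nnegrE ?sqrtr_ge0 ?D_sq //.
by rewrite mulr_ge0 // (ltW u_gt0).
Qed.

Let D_lt : D < 1 - u.
Proof.
rewrite -(ltr_pXn2r (isT : (0 < 2)%N)) ?nnegrE ?sqrtr_ge0 ?subr_ge0 ?(ltW u_lt1) //.
by rewrite D_sq ltrBlDr ltrDl.
Qed.

Let D_sub_gt0 : 0 < D - u.
Proof. by have := D_ge; have := u_gt0; lra. Qed.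

Lemma char_shift_lt_half : u < 2^-1.
Proof. by have := D_ge; have := D_lt; lra. Qed.

Lemma char_kappa_le : kappa <= 16 / 15.
Proof.
have : 2 * u / (D - u) <= 15^-1 by rewrite ler_pdivrMr //; have := D_ge; lra.
lra.
Qed.

Lemma char_seq_gt0 t : 0 < s t.
Proof.
have rm0 : 0 < rm by have := D_lt; lra.
have rp0 : 0 < rp by have := sqrtr_ge0 ((1 - u) ^+ 2 - e); lra.
have kappa0 : 0 <= kappa.
  by rewrite addr_ge0 // divr_ge0 ?mulr_ge0 ?(ltW u_gt0) ?(ltW D_sub_gt0).
have := exprn_gt0 t rp0; have := mulr_ge0 kappa0 (exprn_ge0 t (ltW rm0)); lra.
Qed.

Lemma char_seq_rec t : s t.+2 = (1 - u) * s t.+1 - e / 4 * s t.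
Proof.
have e4 : e / 4 = ((1 - u) ^+ 2 - D ^+ 2) / 4 by rewrite D_sq; ring.
have rp2 : rp ^+ 2 = (1 - u) * rp - e / 4 by rewrite e4; field.
have rm2 : rm ^+ 2 = (1 - u) * rm - e / 4 by rewrite e4; field.
by rewrite (char_root_exprS rp2) (char_root_exprS rm2); ring.
Qed.

Lemma char_seq_init : (2^-1 - u)^-1 = s 0 / s 1.
Proof.
have D0 : 0 < D by have := D_sub_gt0; have := u_gt0; lra.
have u2 : 0 < 1 - 2 * u by have := char_shift_lt_half; lra.
rewrite expr0 !expr1 mulr1; field.
have -> : (1 - u + D) * (D - u) + (D - u + 2 * u) * (1 - u - D) = 2 * D * (1 - 2 * u).
  by ring.
by rewrite !gt_eqF ?mulr_gt0 //; lra.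
Qed.

End CharacteristicRoots.

Lemma anpm_shift_admissible (R : rcfType) (L beta : R) :
  0 < beta -> 2 * Num.sqrt beta < L ->
  [/\ 0 < 32^-1 * ((L - 2 * Num.sqrt beta) / L), 0 < 4 * beta / L ^+ 2 &
      (31 * (32^-1 * ((L - 2 * Num.sqrt beta) / L))) ^+ 2
        <= (1 - 32^-1 * ((L - 2 * Num.sqrt beta) / L)) ^+ 2 - 4 * beta / L ^+ 2].
Proof.
move=> beta0 qL; have q0 : 0 < Num.sqrt beta by rewrite sqrtr_gt0.
have L0 : 0 < L by lra.
set x := 2 * Num.sqrt beta / L.
have x0 : 0 < x by rewrite divr_gt0 ?mulr_gt0.
have x1 : x < 1 by rewrite ltr_pdivrMr // mul1r.
have -> : (L - 2 * Num.sqrt beta) / L = 1 - x by rewrite /x; field; rewrite gt_eqF.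
have -> : 4 * beta / L ^+ 2 = x ^+ 2.
  by rewrite /x -[in LHS](sqr_sqrtr (ltW beta0)); field; rewrite gt_eqF.
(* with u := (1 - x) / 32 one has 1 - u - x = 31 u, so the gap is 62 u x *)
split; [lra | by rewrite exprn_gt0 | nra].
Qed.

(* d = k + m with k >= 1, m >= 1 (i.e. d > k >= 1); eigenvalues are lam 1, ..., lam d *)
Theorem lemma4 (R : realType) (k m : nat) (hk : (0 < k)%N) (hm : (0 < m)%N)
  (eps : R) (heps0 : 0 < eps) (heps1 : eps < 1)
  (A : 'M[R]_(k + m)) (lam : nat -> R) (U : 'M[R]_(k + m))
  (hAsym : A^T = A)
  (hUorth : U^T *m U = 1%:M)
  (hAeig : A = U *m diag_mx (\row_(i < k + m) lam i.+1) *m U^T)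
  (hlam_mono : forall i j : nat, (1 <= i)%N -> (i <= j)%N -> (j <= k + m)%N -> lam j <= lam i)
  (hlam_nneg : 0 <= lam (k + m)%N)
  (hgap : lam k > lam k.+1)
  (beta : R) (hbeta : 0 < beta)
  (hbk : lam k > 2 * Num.sqrt beta) (hbk1 : 2 * Num.sqrt beta >= lam k.+1)
  (X : nat -> 'M[R]_(k + m, k)) (Rm : nat -> 'M[R]_k) (Xi : nat -> 'M[R]_(k + m, k))
  (hX0 : (X 0)^T *m X 0 = 1%:M)
  (hcos0 : 0 < cos (theta_k (lsubmx U) (X 0)))
  (hQR1 : isQR (2^-1 *: (A *m X 0) + Xi 0) (X 1%N) (Rm 1%N))
  (hQR : forall t : nat,
     isQR (A *m X t.+1 - beta *: (X t *m invmx (Rm t.+1)) + Xi t.+1) (X t.+2) (Rm t.+2))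
  (hXi_perp : forall t : nat,
     opnorm ((rsubmx U)^T *m Xi t) <= 32^-1 * (lam k - 2 * Num.sqrt beta) * eps)
  (hXi_par : forall t : nat,
     opnorm ((lsubmx U)^T *m Xi t)
       <= 32^-1 * (lam k - 2 * Num.sqrt beta) * cos (theta_k (lsubmx U) (X t))) :
  let c : R := 32^-1 in
  let Delta : R := (lam k - 2 * Num.sqrt beta) / lam k in
  let disc : R := Num.sqrt ((1 - c * Delta) ^+ 2 - 4 * beta / lam k ^+ 2) in
  let rp : R := ((1 - c * Delta) + disc) / 2 in
  let rm : R := ((1 - c * Delta) - disc) / 2 in
  let kappa : R := 1 + 2 * c * Delta / (disc - c * Delta) in
  let Lam : 'M[R]_k := diag_mx (\row_(i < k) lam i.+1) in
  (forall t : nat,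
     opnorm (Gmat beta Lam (lsubmx U) Xi X t)
       <= (rp ^+ t + kappa * rm ^+ t) / (rp ^+ t.+1 + kappa * rm ^+ t.+1))
  /\ kappa <= 16 / 15.
Proof.
move=> c Delta disc rp rm kappa Lam.
have [u_gt0 e_gt0 disc_ge] := anpm_shift_admissible hbeta hbk.
have -> : kappa = 1 + 2 * (c * Delta) / (disc - c * Delta) by rewrite /kappa mulrA.
split; last exact: char_kappa_le.
have L0 : 0 < lam k by have := sqrtr_ge0 beta; lra.
have Lam_ge (i : 'I_k) : lam k <= (\row_(i < k) lam i.+1) 0 i.
  by rewrite mxE; apply: hlam_mono => //; exact: leq_addr.
have X_orth t : (X t)^T *m X t = 1%:M.
  by case: t => [|[|t]] //; [case: hQR1 | case: (hQR t)].
have E_le t : opnorm (Emat Lam (lsubmx U) (Xi t) (X t)) <= c * Delta.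
  rewrite /c /Delta mulrA; apply: opnorm_Emat hk L0 Lam_ge _ hUorth (X_orth t) (hXi_par t).
  by rewrite mulr_ge0 ?invr_ge0 // subr_ge0 (ltW hbk).
elim=> [|t IH] /=.
  rewrite scalemx1 -(char_seq_init u_gt0 e_gt0 disc_ge).
  exact: opnorm_invmx_scalar_addr (E_le 0%N) (char_shift_lt_half u_gt0 e_gt0 disc_ge).
have [step_gt0 stepE] := recurrence_ratio (char_seq_gt0 u_gt0 e_gt0 disc_ge)
  (char_seq_rec disc_ge) t.
have e4 : 4 * beta / lam k ^+ 2 / 4 = beta / lam k ^+ 2 by field; rewrite gt_eqF.
rewrite e4 in step_gt0 stepE; rewrite -stepE.
exact: opnorm_Gmat_step L0 Lam_ge (ltW hbeta) IH (E_le t.+1) step_gt0.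
Qed.
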